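(* Let $G=(V,E)$ be a connected finite undirected graph without loops, with vertex set $V=\{1,\dots,n\}$, $n\ge 2$. Let $D$ be a self-adjoint $n\times n$ complex matrix compatible with $G$, i.e. $D_{ij}=D_{ji}=0$ whenever $i\neq j$ and $\{i,j\}\notin E$. For $v\in V$ let $\Delta(v)$ be the degree of $v$ in $G$ (the number of edges of $G$ incident to $v$), let $\Delta=\mathrm{diag}(\Delta(1),\dots,\Delta(n))$, let $\Delta(G)=\max\{\Delta(i)\mid i=1,\dots,n\}$, and let $D_\Delta=\Delta^{-1/2}D\Delta^{-1/2}$. Then for all $i,j\in V$, $$\ell^D(i,j)\le d^{D_\Delta}(i,j)\le \Delta(G)\,d^D(i,j).$$
   Context: For a self-adjoint $n\times n$ matrix $M$, the noncommutative distance is $d^M(i,j)=\sup\{|a(i)-a(j)| : a\in\mathbb{C}^n,\ \|[M,\pi(a)]\|\le 1\}\in[0,+\infty]$, where $\pi(a)=\mathrm{diag}(a(1),\dots,a(n))$ and $\|\cdot\|$ is the operator norm. The weight of an edge $\{i,j\}\in E$ is $w^D(i,j)=|D_{ij}|^{-1}\in(0,+\infty]$. The length of a path in $G$ is the sum of the weights of its edges, and $\ell^D(i,j)$ (the geodesic distance) is the infimum of the lengths of all paths in $G$ from $i$ to $j$. *)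

From HB Require Import structures.
From mathcomp Require Import all_boot all_order all_algebra.
From mathcomp Require Import complex.
From mathcomp Require Import all_classical reals constructive_ereal ereal.
Set Implicit Arguments. Unset Strict Implicit. Unset Printing Implicit Defensive.
Import Order.TTheory GRing.Theory Num.Theory.
Import ComplexField.

Local Open Scope ring_scope.

Section Defs.
Variable R : realType.
Local Notation C := R[i].

Definition cmod (z : C) : R := Normc.normc z.

Definition vnorm n (x : 'cV[C]_n) : R := Num.sqrt (\sum_i cmod (x i 0) ^+ 2).

Definition opnorm n (A : 'M[C]_n) : \bar R :=
  ereal_sup [set (vnorm (A *m x))%:E | x in [set x : 'cV[C]_n | vnorm x <= 1]].

Definition piv n (a : 'rV[C]_n) : 'M[C]_n := diag_mx a.

Definition commut n (M B : 'M[C]_n) : 'M[C]_n := M *m B - B *m M.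

Definition ncdist n (M : 'M[C]_n) (i j : 'I_n) : \bar R :=
  ereal_sup [set (cmod (a 0 i - a 0 j))%:E |
             a in [set a : 'rV[C]_n | (opnorm (commut M (piv a)) <= 1%:E)%E]].

Definition selfadjoint n (M : 'M[C]_n) : Prop := forall i j, M j i = (M i j)^*.

Definition simple_graph n (E : rel 'I_n) : Prop :=
  (forall i j, E i j = E j i) /\ (forall i, ~~ E i i).

Definition connected_graph n (E : rel 'I_n) : Prop := forall i j, connect E i j.

Definition compatible n (E : rel 'I_n) (D : 'M[C]_n) : Prop :=
  forall i j, i != j -> ~~ E i j -> D i j = 0 /\ D j i = 0.

Definition degree n (E : rel 'I_n) (v : 'I_n) : nat := #|[set w | E v w]|.

Definition maxdeg n (E : rel 'I_n) : nat := \max_(i < n) degree E i.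

Definition deg_invsqrt n (E : rel 'I_n) : 'M[C]_n :=
  diag_mx (\row_i (((Num.sqrt ((degree E i)%:R : R))^-1)%:C)%C).

Definition DDelta n (E : rel 'I_n) (D : 'M[C]_n) : 'M[C]_n :=
  deg_invsqrt E *m D *m deg_invsqrt E.

(* weight of an edge: |D_ij|^{-1} in (0,+oo], with 1/0 = +oo *)
Definition weight n (D : 'M[C]_n) (i j : 'I_n) : \bar R :=
  if D i j == 0 then +oo%E else ((cmod (D i j))^-1)%:E.

(* length of the path i = x_0, x_1, ..., x_k (x_1..x_k given by p) *)
Definition path_length n (D : 'M[C]_n) (i : 'I_n) (p : seq 'I_n) : \bar R :=
  (\sum_(e <- zip (i :: p) p) weight D e.1 e.2)%E.

Definition geodist n (E : rel 'I_n) (D : 'M[C]_n) (i j : 'I_n) : \bar R :=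
  ereal_inf [set path_length D i p |
             p in [set p : seq 'I_n | path E i p /\ last i p = j]].

End Defs.

From HB Require Import structures.
From mathcomp Require Import all_boot all_order all_algebra.
From mathcomp Require Import complex.
From mathcomp Require Import all_classical reals constructive_ereal ereal.
From mathcomp Require Import ring lra.
Import Order.TTheory GRing.Theory Num.Theory.
Import ComplexField.
Local Open Scope ring_scope.

(* For the first inequality, fix [N] below the geodesic distance [l(i, j)] and
   take [a(k) = min(N, l(i, k))]. Along an edge [{k, m}] this function varies
   by at most the edge weight [|D_km|^-1], so the entries of
   [[D_Delta, pi(a)]] are bounded by [Delta(k)^(-1/2) Delta(m)^(-1/2)] on
   edges and vanish elsewhere; by the Schur test (with the adjacency matrix as
   weights) its operator norm is at most 1, whence [N = |a(i) - a(j)|] is a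
   lower bound of the noncommutative distance.
   For the second inequality, if [a] is admissible for [D_Delta] then
   [a / Delta(G)] is admissible for [D], because
   [[D, pi(a / Delta(G))] = Q [D_Delta, pi(a)] Q] with the diagonal contraction
   [Q = (Delta / Delta(G))^(1/2)]. *)

Section NoncommutativeDistance.
Variable R : realType.
Local Notation C := R[i].

Lemma cmod_ge0 (z : C) : 0 <= cmod z.
Proof. by case: z => a b; rewrite /cmod /= sqrtr_ge0. Qed.

Lemma cmod0 : cmod (0 : C) = 0.
Proof. exact: Normc.normc0. Qed.

Lemma cmod_eq0 (z : C) : (cmod z == 0) = (z == 0).
Proof. by apply/eqP/eqP => [/Normc.eq0_normc|->]; last exact: cmod0. Qed.

Lemma cmodM (x y : C) : cmod (x * y) = cmod x * cmod y.
Proof. exact: Normc.normcM. Qed.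

Lemma cmodV (z : C) : cmod z^-1 = (cmod z)^-1.
Proof. exact: Normc.normcV. Qed.

Lemma cmodJ (z : C) : cmod (z^*)%C = cmod z.
Proof. by case: z => a b; rewrite /cmod /= sqrrN. Qed.

Lemma cmodR (r : R) : cmod (r%:C)%C = `|r|.
Proof. by rewrite /cmod /= expr0n /= addr0 sqrtr_sqr. Qed.

Lemma cmod_sum (I : finType) (F : I -> C) :
  cmod (\sum_i F i) <= \sum_i cmod (F i).
Proof.
elim/big_ind2: _ => [|x1 y1 x2 y2 le1 le2|//]; first by rewrite cmod0.
exact: le_trans (le_normcD _ _) (lerD le1 le2).
Qed.

Lemma sqr_sum_weighted_le (I : finType) (w y : I -> R) :
  (forall a, 0 <= w a) ->
  (\sum_a w a * y a) ^+ 2 <= (\sum_a w a) * \sum_a w a * y a ^+ 2.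
Proof.
move=> w_ge0.
have : 0 <= \sum_a \sum_b w a * w b * (y a - y b) ^+ 2.
  apply: sumr_ge0 => a _; apply: sumr_ge0 => b _.
  by rewrite mulr_ge0 ?sqr_ge0 ?mulr_ge0.
have -> : \sum_a \sum_b w a * w b * (y a - y b) ^+ 2 =
    \sum_a \sum_b w a * (w b * y b ^+ 2) + \sum_a \sum_b w b * (w a * y a ^+ 2)
    - 2 * \sum_a \sum_b (w a * y a) * (w b * y b).
  rewrite mulr_sumr -!big_split -sumrB; apply: eq_bigr => a _.
  by rewrite mulr_sumr -!big_split -sumrB; apply: eq_bigr => b _ /=; ring.
rewrite [X in _ + X - _]exchange_big /=.
under [X in _ + _ - 2 * X]eq_bigr do rewrite -mulr_sumr.
under eq_bigr do rewrite -mulr_sumr.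
rewrite -!mulr_suml -expr2; lra.
Qed.

Lemma lee_fin_lbounds (x y : \bar R) : (0 <= x)%E ->
  (forall r, 0 <= r -> (r%:E <= x)%E -> (r%:E <= y)%E) -> (x <= y)%E.
Proof.
case: x => [r| |] //= x_ge0 y_ge; first by apply: y_ge; rewrite -?lee_fin.
have -> // : y = +oo%E.
by apply/eqyP => r r_gt0; apply: y_ge; [exact: ltW | exact: leey].
Qed.

Definition capped (N : R) (x : \bar R) : R := fine (Order.min N%:E x).

Lemma cappedE N x : (0 <= x)%E -> (capped N x)%:E = Order.min N%:E x.
Proof. by case: x => [r| |] // _; rewrite /capped ?(min_l (leey _)) // -EFin_min. Qed.

Lemma capped_le_add N x y w : (0 <= x)%E -> (0 <= y)%E -> 0 <= w ->
  (y <= x + w%:E)%E -> capped N y <= capped N x + w.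
Proof.
move=> x_ge0 y_ge0 w_ge0 y_le; rewrite -lee_fin EFinD !cappedE // ge_min.
have [x_le|N_lt] := leP x N%:E; first by rewrite y_le orbT.
by rewrite leeDl ?lee_fin.
Qed.

Lemma capped0 N : 0 <= N -> capped N 0%E = 0.
Proof. by move=> N_ge0; rewrite /capped min_r ?lee_fin. Qed.

Lemma capped_id N x : (N%:E <= x)%E -> capped N x = N.
Proof. by move=> N_le; rewrite /capped min_l. Qed.

Section Matrices.
Variable n : nat.

Lemma le_vnorm (x y : 'cV[C]_n) :
  \sum_k cmod (y k 0) ^+ 2 <= \sum_k cmod (x k 0) ^+ 2 -> vnorm y <= vnorm x.
Proof.
by move=> le_xy; rewrite /vnorm ler_sqrt // sumr_ge0 // => k _; rewrite sqr_ge0.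
Qed.

Lemma opnorm_le1P (A : 'M[C]_n) :
  (opnorm A <= 1%:E)%E <-> (forall x, vnorm x <= 1 -> vnorm (A *m x) <= 1).
Proof.
split=> [A_le1 x x_le1|A_le1].
  by rewrite -lee_fin (le_trans _ A_le1) //; apply: ereal_sup_ubound; exists x.
by apply: ge_ereal_sup => _ [x x_le1 <-]; rewrite lee_fin A_le1.
Qed.

Lemma schur_test (w : 'I_n -> 'I_n -> R) (c : 'I_n -> R) (M : 'M[C]_n) :
  (forall k m, 0 <= w k m) -> (forall k m, w k m = w m k) ->
  (forall k, 0 <= c k) -> (forall k, c k ^+ 2 * \sum_m w k m <= 1) ->
  (forall k m, cmod (M k m) <= c k * w k m * c m) ->
  (opnorm M <= 1%:E)%E.
Proof.
move=> w_ge0 wC c_ge0 cw_le1 M_le.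
apply/opnorm_le1P => x; apply: le_trans; apply: le_vnorm.
pose y m := c m * cmod (x m 0).
have y_ge0 m : 0 <= y m by rewrite mulr_ge0 ?cmod_ge0.
have row_le k : cmod ((M *m x) k 0) ^+ 2 <= \sum_m w k m * y m ^+ 2.
  have Mx_le : cmod ((M *m x) k 0) <= c k * \sum_m w k m * y m.
    rewrite mxE mulr_sumr (le_trans (cmod_sum _ _)) // ler_sum // => m _.
    by rewrite cmodM /y !mulrA ler_wpM2r ?cmod_ge0 ?M_le.
  have S_ge0 : 0 <= \sum_m w k m * y m.
    by rewrite sumr_ge0 // => m _; rewrite mulr_ge0 ?w_ge0 ?y_ge0.
  have T_ge0 : 0 <= \sum_m w k m * y m ^+ 2.
    by rewrite sumr_ge0 // => m _; rewrite mulr_ge0 ?w_ge0 ?sqr_ge0.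
  have := sqr_sum_weighted_le _ (w k) y (w_ge0 k).
  have := cw_le1 k; have := cmod_ge0 ((M *m x) k 0); have := c_ge0 k.
  move: Mx_le S_ge0 T_ge0; nra.
apply: le_trans (ler_sum _ (fun k _ => row_le k)) _.
rewrite exchange_big /= ler_sum // => m _.
under eq_bigr do rewrite wC /y exprMn mulrA.
by rewrite -!mulr_suml [_ * c m ^+ 2]mulrC ler_piMl ?sqr_ge0.
Qed.

Lemma vnorm_diag_le (p : 'rV[C]_n) (x : 'cV[C]_n) :
  (forall k, cmod (p 0 k) <= 1) -> vnorm (diag_mx p *m x) <= vnorm x.
Proof.
move=> p_le1; apply: le_vnorm; apply: ler_sum => k _.
by rewrite mul_diag_mx mxE cmodM exprMn ler_piMl ?sqr_ge0 ?exprn_ile1 ?cmod_ge0.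
Qed.

Lemma opnorm_diag_scale_le1 (p q : 'rV[C]_n) (B : 'M[C]_n) :
  (forall k, cmod (p 0 k) <= 1) -> (forall k, cmod (q 0 k) <= 1) ->
  (opnorm B <= 1%:E)%E -> (opnorm (diag_mx p *m B *m diag_mx q) <= 1%:E)%E.
Proof.
move=> p_le1 q_le1 /opnorm_le1P B_le1; apply/opnorm_le1P => x x_le1.
rewrite -!mulmxA (le_trans (vnorm_diag_le _ _ p_le1)) // B_le1 //.
exact: le_trans (vnorm_diag_le _ _ q_le1) x_le1.
Qed.

Lemma commutE (M : 'M[C]_n) (a : 'rV[C]_n) k m :
  commut M (piv a) k m = M k m * (a 0 m - a 0 k).
Proof. by rewrite /commut /piv mul_mx_diag mul_diag_mx !mxE; ring. Qed.

Lemma le_ncdist (M : 'M[C]_n) (a : 'rV[C]_n) i j :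
  (opnorm (commut M (piv a)) <= 1%:E)%E ->
  ((cmod (a 0 i - a 0 j))%:E <= ncdist M i j)%E.
Proof. by move=> a_adm; apply: ereal_sup_ubound; exists a. Qed.

Section GeodesicDistance.
Variables (E : rel 'I_n) (D : 'M[C]_n).

Lemma weight_ge0 k m : (0 <= weight D k m)%E.
Proof. by rewrite /weight; case: eqP => // _; rewrite lee_fin invr_ge0 cmod_ge0. Qed.

Lemma path_length_cons i k p :
  path_length D i (k :: p) = (weight D i k + path_length D k p)%E.
Proof. by rewrite /path_length /= big_cons. Qed.

Lemma path_length_rcons i p m :
  path_length D i (rcons p m) = (path_length D i p + weight D (last i p) m)%E.
Proof.
elim: p i => [|k p IHp] i; first by rewrite /path_length /= big_cons !big_nil adde0 add0e.
by rewrite rcons_cons !path_length_cons IHp addeA.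
Qed.

Lemma geodist_ge0 i j : (0 <= geodist E D i j)%E.
Proof.
by apply: le_ereal_inf_tmp => _ [p _ <-]; apply: sume_ge0 => e _; apply: weight_ge0.
Qed.

Lemma geodist_refl i : geodist E D i i = 0%E.
Proof.
apply/eqP; rewrite eq_le geodist_ge0 andbT.
by apply: ereal_inf_lbound; exists [::]; rewrite //= /path_length big_nil.
Qed.

Lemma geodist_edge i k m : E k m -> D k m != 0 ->
  (geodist E D i m <= geodist E D i k + ((cmod (D k m))^-1)%:E)%E.
Proof.
move=> Ekm Dkm_neq0; rewrite -leeBlDr //.
apply: le_ereal_inf_tmp => _ [p [Ep p_last] <-]; rewrite leeBlDr //.
apply: ereal_inf_lbound; exists (rcons p m).
  by split; [rewrite rcons_path Ep p_last | rewrite last_rcons].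
by rewrite path_length_rcons p_last /weight (negbTE Dkm_neq0).
Qed.

End GeodesicDistance.

Section Graph.
Variable E : rel 'I_n.
Hypothesis E_sym : forall k m, E k m = E m k.

(* Isolated vertices get [(sqrt 0)^-1 = 0]. *)
Definition invsqrt_deg k : R := (Num.sqrt (degree E k)%:R)^-1.

Lemma invsqrt_deg_ge0 k : 0 <= invsqrt_deg k.
Proof. by rewrite invr_ge0 sqrtr_ge0. Qed.

Lemma degree_sum k : (degree E k)%:R = \sum_m (E k m)%:R :> R.
Proof.
rewrite /degree -sum1_card natr_sum big_mkcond /=.
by apply: eq_bigr => m _; rewrite inE; case: (E k m).
Qed.

Lemma sqr_invsqrt_deg_le1 k : invsqrt_deg k ^+ 2 * \sum_m (E k m)%:R <= 1.
Proof.
rewrite -degree_sum /invsqrt_deg exprVn sqr_sqrtr ?ler0n //.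
have [->|deg_neq0] := eqVneq (degree E k) 0%N; first by rewrite mulr0 ler01.
by rewrite mulVf ?pnatr_eq0.
Qed.

Lemma DDeltaE (D : 'M[C]_n) k m :
  DDelta E D k m = (invsqrt_deg k)%:C%C * D k m * (invsqrt_deg m)%:C%C.
Proof. by rewrite /DDelta /deg_invsqrt mul_mx_diag mul_diag_mx !mxE. Qed.

Lemma opnorm_commut_DDelta_le1 (D : 'M[C]_n) (a : 'rV[C]_n) :
  (forall k m, cmod (D k m * (a 0 m - a 0 k)) <= (E k m)%:R) ->
  (opnorm (commut (DDelta E D) (piv a)) <= 1%:E)%E.
Proof.
move=> Da_le.
apply: (schur_test (fun k m => (E k m)%:R) invsqrt_deg) => [k m|k m|k|k|k m].
- exact: ler0n.
- by rewrite E_sym.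
- exact: invsqrt_deg_ge0.
- exact: sqr_invsqrt_deg_le1.
have -> : commut (DDelta E D) (piv a) k m =
    (invsqrt_deg k * invsqrt_deg m)%:C%C * (D k m * (a 0 m - a 0 k)).
  by rewrite commutE DDeltaE rmorphM /=; ring.
rewrite cmodM cmodR ger0_norm ?mulr_ge0 ?invsqrt_deg_ge0 // mulrAC.
by rewrite ler_wpM2r ?ler_wpM2l ?invsqrt_deg_ge0.
Qed.

Section Compatible.
Variable D : 'M[C]_n.
Hypotheses (D_sa : selfadjoint D) (D_compat : compatible E D).

Lemma commut_entry_le (f : 'I_n -> R) :
  (forall k m, E k m -> D k m != 0 -> f m <= f k + (cmod (D k m))^-1) ->
  forall k m, cmod (D k m * (f m - f k)%:C%C) <= (E k m)%:R.
Proof.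
move=> f_lip k m.
have [<-|k_neq_m] := eqVneq k m; first by rewrite subrr mulr0 cmod0.
have [Ekm|nEkm] := boolP (E k m); last first.
  by have [-> _] := D_compat k m k_neq_m nEkm; rewrite mul0r cmod0.
have [->|Dkm_neq0] := eqVneq (D k m) 0; first by rewrite mul0r cmod0.
have Dmk_neq0 : D m k != 0 by rewrite D_sa conjc_eq0.
have Dkm_gt0 : 0 < cmod (D k m) by rewrite lt_def cmod_eq0 Dkm_neq0 cmod_ge0.
have := f_lip k m Ekm Dkm_neq0.
have Emk : E m k by rewrite E_sym.
have := f_lip m k Emk Dmk_neq0.
rewrite D_sa cmodJ cmodM cmodR => fmk fkm.
rewrite -(mulfV (lt0r_neq0 Dkm_gt0)) ler_wpM2l ?cmod_ge0 //.
by rewrite ler_norml; apply/andP; split; lra.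
Qed.

Lemma geodist_le_ncdist_DDelta i j :
  (geodist E D i j <= ncdist (DDelta E D) i j)%E.
Proof.
apply: lee_fin_lbounds => [|N N_ge0 N_le]; first exact: geodist_ge0.
pose f k := capped N (geodist E D i k).
have f_lip k m : E k m -> D k m != 0 -> f m <= f k + (cmod (D k m))^-1.
  move=> Ekm Dkm_neq0.
  apply: capped_le_add; rewrite ?geodist_ge0 ?invr_ge0 ?cmod_ge0 //.
  exact: geodist_edge.
have a_adm : (opnorm (commut (DDelta E D) (piv (\row_k (f k)%:C%C))) <= 1%:E)%E.
  apply: opnorm_commut_DDelta_le1 => k m; rewrite !mxE -rmorphB.
  exact: commut_entry_le.
have := le_ncdist _ _ i j a_adm.
rewrite !mxE -rmorphB cmodR /f geodist_refl capped0 // capped_id //.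
by rewrite sub0r normrN ger0_norm.
Qed.

End Compatible.

Lemma degree_gt0 : (1 < n)%N -> connected_graph E -> forall v, (0 < degree E v)%N.
Proof.
move=> n_gt1 E_conn v.
have [w w_neq_v] : exists w : 'I_n, w != v.
  pose v0 := Ordinal (ltnW n_gt1); pose v1 := Ordinal n_gt1.
  have [->|v_neq0] := eqVneq v v0; first by exists v1; rewrite -val_eqE.
  by exists v0; rewrite eq_sym.
have /connectP [[|x p] /= Ep p_last] := E_conn v w.
  by rewrite p_last eqxx in w_neq_v.
by rewrite /degree card_gt0; apply/set0Pn; exists x; rewrite inE; case/andP: Ep.
Qed.

Hypothesis deg_gt0 : forall k, (0 < degree E k)%N.

Lemma commut_rescale_DDelta (D : 'M[C]_n) (a : 'rV[C]_n) (K : R) : 0 < K ->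
  let q := \row_k (Num.sqrt (degree E k)%:R / Num.sqrt K)%:C%C in
  commut D (piv ((K%:C%C)^-1 *: a)) =
    diag_mx q *m commut (DDelta E D) (piv a) *m diag_mx q.
Proof.
move=> K_gt0 q; apply/matrixP => k m.
rewrite commutE mul_mx_diag mul_diag_mx [in RHS]mxE [in RHS]mxE.
rewrite commutE DDeltaE !mxE /invsqrt_deg.
have sqrt_neq0 x : 0 < x -> (Num.sqrt x)%:C%C != 0 :> C.
  by move=> x_gt0; rewrite fmorph_eq0 gt_eqF ?sqrtr_gt0.
have -> : K%:C%C = ((Num.sqrt K)%:C%C) ^+ 2 :> C by rewrite -rmorphXn sqr_sqrtr ?ltW.
rewrite !rmorphM !fmorphV /=.
by field; rewrite !sqrt_neq0 ?ltr0n.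
Qed.

Lemma ncdist_DDelta_le (D : 'M[C]_n) i j :
  (ncdist (DDelta E D) i j <= (maxdeg E)%:R%:E * ncdist D i j)%E.
Proof.
apply: ge_ereal_sup => _ [a a_adm <-].
pose K : R := (maxdeg E)%:R.
have deg_le k : (degree E k)%:R <= K by rewrite ler_nat; exact: leq_bigmax.
have K_gt0 : 0 < K by apply: lt_le_trans (deg_le i); rewrite ltr0n.
have q_le1 k : cmod (Num.sqrt (degree E k)%:R / Num.sqrt K)%:C%C <= 1.
  rewrite cmodR ger0_norm ?divr_ge0 ?sqrtr_ge0 // ler_pdivrMr ?sqrtr_gt0 // mul1r.
  by rewrite ler_sqrt ?deg_le // ltW.
have b_adm : (opnorm (commut D (piv ((K%:C%C)^-1 *: a))) <= 1%:E)%E.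
  rewrite (commut_rescale_DDelta _ _ _ K_gt0).
  by apply: opnorm_diag_scale_le1 a_adm => k; rewrite mxE q_le1.
have := le_ncdist D ((K%:C%C)^-1 *: a) i j b_adm.
have scaleE k : ((K%:C%C)^-1 *: a) 0 k = (K%:C%C)^-1 * a 0 k by rewrite mxE.
rewrite !scaleE -mulrBr cmodM cmodV cmodR (gtr0_norm K_gt0) -/K => b_le.
rewrite -[cmod _](mulVKf (lt0r_neq0 K_gt0)) EFinM.
by apply: lee_wpmul2l b_le; rewrite lee_fin ltW.
Qed.

End Graph.
End Matrices.
End NoncommutativeDistance.

Theorem mainTheorem1 (R : realType) (n : nat) (E : rel 'I_n) (D : 'M[R[i]]_n) :
  (2 <= n)%N ->
  simple_graph E ->
  connected_graph E ->
  selfadjoint D ->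
  compatible E D ->
  forall i j : 'I_n,
    (geodist E D i j <= ncdist (DDelta E D) i j)%E /\
    (ncdist (DDelta E D) i j <= (maxdeg E)%:R%:E * ncdist D i j)%E.
Proof.
move=> n_gt1 [E_sym _] E_conn D_sa D_compat i j; split.
  exact: geodist_le_ncdist_DDelta.
exact/ncdist_DDelta_le/degree_gt0.
Qed.
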